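(* Let $t\in[0,1]$ and let $(h,k)\in[0,1]^2$ be a point of ROC space that outperforms both baseline classifiers, i.e. $\mathrm{Cost}(h,k,t)<\mathrm{Cost}(0,0,t)$ and $\mathrm{Cost}(h,k,t)<\mathrm{Cost}(1,1,t)$. Then the area of lesser classifiers of $(h,k)$ is $$A_t(h,k)=1+\frac{(1-k)^2}{2}+\frac{h^2}{2}-h(1-k)-\frac{(1-k)^2}{2t}-\frac{h^2}{2(1-t)}.$$
   Context: ROC space is $[0,1]^2$, a point $(x,y)$ representing a binary classifier with false positive rate $x$ and true positive rate $y$. For $t\in[0,1]$, the normalized expected cost of $(x,y)$ is $\mathrm{Cost}(x,y,t)=tx+(1-t)(1-y)$. The baseline classifiers are the points $(0,0)$ (label everything negative) and $(1,1)$ (label everything positive). The area of lesser classifiers $A_t(h,k)$ is the area (Lebesgue measure) of the set of points $(h',k')\in[0,1]^2$ with $\mathrm{Cost}(h',k',t)>\mathrm{Cost}(h,k,t)$. *)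

From mathcomp Require Import all_boot all_order all_algebra.
From mathcomp Require Import all_classical all_reals all_analysis.
Set Implicit Arguments. Unset Strict Implicit. Unset Printing Implicit Defensive.
Import Order.TTheory GRing.Theory Num.Theory.
Local Open Scope classical_set_scope.
Local Open Scope ring_scope.

Definition Cost {R : realType} (x y t : R) : R := t * x + (1 - t) * (1 - y).

Definition roc_square {R : realType} : set (R * R) :=
  [set p | (0 <= p.1 <= 1) /\ (0 <= p.2 <= 1)].

Definition area_lesser {R : realType} (t h k : R) : \bar R :=
  ((@lebesgue_measure R) \x (@lebesgue_measure R))%E
    (roc_square `&` [set p | Cost p.1 p.2 t > Cost h k t]).

From mathcomp Require Import all_boot all_order all_algebra.
From mathcomp Require Import all_classical all_reals all_analysis.
From mathcomp Require Import measurable_realfun ring lra.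
Import Order.TTheory GRing.Theory Num.Theory.
Import numFieldNormedType.Exports.
Local Open Scope ring_scope.
Local Open Scope classical_set_scope.

(* At level c = Cost h k t, the lesser classifiers are the points of the unit
   square strictly below the iso-cost line of slope t/(1-t) through (c/t, 1).
   Beating both baselines means c < t and c < 1 - t, so that line leaves the
   square through its top and left edges and cuts off a right triangle with
   legs c/t and c/(1-t). Integrating the lengths of the vertical sections gives
   the area 1 - c^2/(2t(1-t)), which expands to the stated formula. *)

Lemma Cost_gtE (R : realType) (t c x y : R) : 0 < t < 1 ->
  (c < Cost x y t) = (y < 1 + t / (1 - t) * (x - c / t)).
Proof.
move=> /andP[t0 t1]; have t1' : 0 < 1 - t by rewrite subr_gt0.
rewrite -[RHS](ltr_pM2l t1') -[LHS]subr_gt0 -[RHS]subr_gt0 /Cost; congr (0 < _).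
by field; rewrite !gt_eqF.
Qed.

Section lebesgue_unit_square.
Variable R : realType.
Local Notation mu := (@lebesgue_measure R).

Lemma integral_affine (a b u v : R) : a <= b ->
  (\int[mu]_(x in `[a, b]) (u + v * x)%:E =
   (u * (b - a) + v / 2 * (b ^+ 2 - a ^+ 2))%:E)%E.
Proof.
rewrite le_eqVlt => /predU1P[<-|ab].
  by rewrite set_itv1 integral_set1 !subrr !mulr0 addr0.
rewrite (@continuous_FTC2 R _ (fun x => u * x + v / 2 * x ^+ 2)) //.
- by rewrite -EFinB; congr EFin; ring.
- apply: continuous_in_subspaceT => x _.
  apply: continuousD; first exact: cst_continuous.
  by apply: continuousM; [exact: cst_continuous | exact: cvg_id].
- split.
  + by move=> x _; apply: derivableD; apply: derivableM => //; apply: exprn_derivable.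
  + apply: cvg_at_right_filter; apply: cvgD; apply: cvgM; (try exact: cvg_cst);
      [exact: cvg_id | exact: exprn_continuous].
  + apply: cvg_at_left_filter; apply: cvgD; apply: cvgM; (try exact: cvg_cst);
      [exact: cvg_id | exact: exprn_continuous].
- by move=> x _; rewrite derive1E derive_val /GRing.scale /=; field.
Qed.

Lemma lebesgue_measure_unit_itv_lt (u : R) : 0 <= u ->
  mu (`[0, 1] `&` [set y | y < u]) = (Order.min 1 u)%:E.
Proof.
move=> u0; have [u1|u1] := leP u 1.
- rewrite (_ : _ `&` _ = `[0, u[).
    rewrite lebesgue_measure_itv /= lte_fin oppr0 adde0.
    case: ifPn => //; rewrite -leNgt => u_le0.
    by rewrite (@le_anti _ _ u 0) ?u_le0.
  apply/seteqP; split => y /=; rewrite !in_itv /=.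
    by move=> [/andP[-> _] ->].
  by move=> /andP[y0 yu]; rewrite y0 /=; split => //; lra.
- rewrite (_ : _ `&` _ = `[0, 1]).
    by rewrite lebesgue_measure_itv /= lte_fin ltr01 oppr0 adde0.
  apply/seteqP; split => y /=; rewrite !in_itv /=; first by case.
  by move=> y01; split => //; move: y01; lra.
Qed.

Lemma measure_roc_square_below_graph (f : R -> R) : (forall x, 0 <= x <= 1 -> 0 <= f x) ->
  (mu \x mu)%E (roc_square `&` [set p | p.2 < f p.1]) =
  (\int[mu]_(x in `[0%R, 1%R]) (Order.min 1 (f x))%:E)%E.
Proof.
move=> f0; rewrite /product_measure1 [RHS]integral_mkcond; apply: eq_integral => x _ /=.
rewrite patchE; case: ifPn => [x01|x01].
- move: x01; rewrite inE /= in_itv /= => x01.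
  rewrite -lebesgue_measure_unit_itv_lt ?f0 //; congr (mu _).
  apply/seteqP; split => y; rewrite /xsection /roc_square /= in_setE /= in_itv /= x01.
    by move=> [[_ ?] ?].
  by move=> [? ?].
- rewrite (_ : xsection _ x = set0) ?measure0 //.
  apply/seteqP; split => y //; rewrite /xsection /roc_square /= in_setE /=.
  by move=> [[x01' _] _]; move/negP: x01; apply; rewrite inE /= in_itv /= x01'.
Qed.

Lemma line_ge0 (beta p x : R) : 0 <= beta -> beta * p <= 1 -> 0 <= x ->
  0 <= 1 + beta * (x - p).
Proof. by move=> beta0 betap1 x0; rewrite mulrBr addrA subr_ge0 -lerBlDl; nra. Qed.

Lemma integral_min1_line (beta p : R) :
  0 <= beta -> 0 <= p <= 1 -> beta * p <= 1 ->
  (\int[mu]_(x in `[0%R, 1%R]) (Order.min 1 (1 + beta * (x - p)))%:E =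
   (1 - beta * p ^+ 2 / 2)%:E)%E.
Proof.
move=> beta0 /andP[p0 p1] betap1.
have mEF D : measurable_fun D (fun x : R => (Order.min 1 (1 + beta * (x - p)))%:E).
  apply/measurable_EFinP/measurable_funTS/measurable_minr; first exact: measurable_cst.
  apply: measurable_funD; first exact: measurable_cst.
  apply: measurable_funM; first exact: measurable_cst.
  by apply: measurable_funB; [exact: measurable_id | exact: measurable_cst].
rewrite (@itv_bndbnd_setU _ _ _ (BRight p)) ?bnd_simp //.
rewrite ge0_integral_setU //=; last 3 first.
- exact: mEF.
- move=> x; rewrite /= !in_itv /= => x01; rewrite lee_fin le_min ler01 line_ge0 //.
  by case: x01 => /andP[x0 _] //; apply: ltW; apply: le_lt_trans x0.
- by apply/disj_setPS => x []; rewrite /= !in_itv /= => /andP[_ xp] /andP[px _]; lra.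
rewrite integral_itv_obnd_cbnd; last exact: mEF.
rewrite [X in (X + _)%E](_ : _ =
    ((1 - beta * p) * (p - 0) + beta / 2 * (p ^+ 2 - 0 ^+ 2))%:E); last first.
  rewrite -integral_affine //; apply: eq_integral => x; rewrite inE /= in_itv /=.
  by move=> /andP[_ xp]; rewrite min_r; [congr EFin; ring | nra].
rewrite [X in (_ + X)%E](_ : _ = (1 * (1 - p) + 0 / 2 * (1 ^+ 2 - p ^+ 2))%:E); last first.
  rewrite -integral_affine //; apply: eq_integral => x; rewrite inE /= in_itv /=.
  by move=> /andP[px _]; rewrite min_l; [rewrite mul0r addr0 | nra].
by rewrite -EFinD; congr EFin; field.
Qed.

End lebesgue_unit_square.

Theorem lemma22 (R : realType) (t h k : R) :
  0 <= t <= 1 -> 0 <= h <= 1 -> 0 <= k <= 1 ->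
  Cost h k t < Cost 0 0 t -> Cost h k t < Cost 1 1 t ->
  area_lesser t h k =
    (1 + (1 - k) ^+ 2 / 2 + h ^+ 2 / 2 - h * (1 - k)
       - (1 - k) ^+ 2 / (2 * t) - h ^+ 2 / (2 * (1 - t)))%:E.
Proof.
move=> /andP[t0 t1] /andP[h0 h1] /andP[k0 k1].
rewrite {2 4}/Cost mulr0 add0r subr0 mulr1 subrr mulr0 addr0.
set c := Cost h k t => c_lt_1t c_lt_t.
have c_ge0 : 0 <= c by apply: addr_ge0; apply: mulr_ge0; lra.
have t01 : 0 < t < 1 by apply/andP; split; lra.
set slope := t / (1 - t); set p := c / t.
have slope_ge0 : 0 <= slope by apply: divr_ge0; lra.
have p01 : 0 <= p <= 1 by rewrite divr_ge0 ?ler_pdivrMr ?mul1r; lra.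
have slope_p : slope * p <= 1.
  rewrite (_ : slope * p = c / (1 - t)) ?ler_pdivrMr ?mul1r; try lra.
  by rewrite /slope /p; field; rewrite !gt_eqF ?subr_gt0; lra.
rewrite /area_lesser.
have -> : [set q : R * R | c < Cost q.1 q.2 t] = [set q | q.2 < 1 + slope * (q.1 - p)].
  by apply/funext => q /=; rewrite Cost_gtE.
rewrite (@measure_roc_square_below_graph _ (fun x => 1 + slope * (x - p))) => [|x /andP[x0 _]];
  last exact: line_ge0.
rewrite integral_min1_line //; congr EFin.
by rewrite /slope /p /c /Cost; field; lra.
Qed.
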